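(* Let $G_3$ be the group described in the context. The map $\sigma:G_3\to G_3$ determined by $a_i^\sigma=b_i$, $b_i^\sigma=a_i$ ($i=1,2,3$), $u_{ij}^\sigma=v_{ij}$, $v_{ij}^\sigma=u_{ij}$, $p_{ij}^\sigma=p_{ij}$, $z_{123}^\sigma=t_{123}$, $t_{123}^\sigma=z_{123}$ is an automorphism of $G_3$ of order $2$.
   Context: For a group, $[x,y]=x^{-1}y^{-1}xy$. $G_3$ is the nilpotent group of class $3$ generated by $a_1,a_2,a_3,b_1,b_2,b_3$ with the following defining relations, where $u_{ij}=[a_i,a_j]$, $v_{ij}=[b_i,b_j]$, $p_{ij}=[a_i,b_j]$, indices in $\{1,2,3\}$: (1) $[a_i,b_i]=1$ and $a_i^2,b_i^2$ are central; (2) for $i<j$: $u_{ij}=u_{ji}$, $v_{ij}=v_{ji}$, $u_{ij}^2=v_{ij}^2=1$; (3) $u_{ij},v_{ij}$ central; (4) $p_{ij}=p_{ji}$, $p_{ij}^2=1$ for $i<j$; (5) for $\{i,j,k\}=\{1,2,3\}$, $z_{ijk}:=[p_{ij},a_k]$ with $z_{ijk}=z_{jik}=z_{kij}$; (6) $t_{ijk}:=[p_{ij},b_k]$ with $t_{ijk}=t_{jik}=t_{kij}$; (7) $z_{ijk}^2=t_{ijk}^2=1$; (8) $z_{ijk},t_{ijk}$ central. Every element of $G_3$ has a unique normal form $a_1^{\alpha_1}a_2^{\alpha_2}a_3^{\alpha_3}b_1^{\alpha_4}b_2^{\alpha_5}b_3^{\alpha_6}u_{12}^{\alpha_7}u_{13}^{\alpha_8}u_{23}^{\alpha_9}v_{12}^{\alpha_{10}}v_{13}^{\alpha_{11}}v_{23}^{\alpha_{12}}p_{12}^{\alpha_{13}}p_{13}^{\alpha_{14}}p_{23}^{\alpha_{15}}z_{123}^{\alpha_{16}}t_{123}^{\alpha_{17}}$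 ($\alpha_1,\dots,\alpha_6\in\mathbb{Z}$, others in $\{0,1\}$), and $\sigma$ is extended to all of $G_3$ through this normal form. *)

From HB Require Import structures.
From mathcomp Require Import all_boot all_order all_algebra.
From mathcomp Require Import monoid.
Set Implicit Arguments. Unset Strict Implicit. Unset Printing Implicit Defensive.

Local Open Scope group_scope.

Section G3.
Variable G : groupType.

Definition zexpg (x : G) (n : int) : G :=
  match n with
  | Posz k => x ^+ k
  | Negz k => (x ^+ k.+1)^-1
  end.

Definition central (x : G) : Prop := forall y : G, x * y = y * x.

Definition idx3 (i : nat) : bool := (1 <= i <= 3)%N.

Variables (a b : nat -> G).

Definition u_ (i j : nat) : G := [~ a i, a j].
Definition v_ (i j : nat) : G := [~ b i, b j].
Definition p_ (i j : nat) : G := [~ a i, b j].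
Definition z_ (i j k : nat) : G := [~ p_ i j, a k].
Definition t_ (i j k : nat) : G := [~ p_ i j, b k].

Definition G3_relations : Prop :=
  (forall i, idx3 i ->
     [~ a i, b i] = 1 /\ central (a i ^+ 2) /\ central (b i ^+ 2)) /\
  (forall i j, idx3 i -> idx3 j -> (i < j)%N ->
     u_ i j = u_ j i /\ v_ i j = v_ j i /\ u_ i j ^+ 2 = 1 /\ v_ i j ^+ 2 = 1) /\
  (forall i j, idx3 i -> idx3 j -> central (u_ i j) /\ central (v_ i j)) /\
  (forall i j, idx3 i -> idx3 j -> (i < j)%N ->
     p_ i j = p_ j i /\ p_ i j ^+ 2 = 1) /\
  (forall i j k, idx3 i -> idx3 j -> idx3 k -> i != j -> j != k -> i != k ->
     z_ i j k = z_ j i k /\ z_ i j k = z_ k i j /\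
     t_ i j k = t_ j i k /\ t_ i j k = t_ k i j /\
     z_ i j k ^+ 2 = 1 /\ t_ i j k ^+ 2 = 1 /\
     central (z_ i j k) /\ central (t_ i j k)).

Definition nilpotent_class_le3 : Prop :=
  forall x y z w : G, [~ x, y, z, w] = 1.

Definition G3_nf (al : nat -> int) (be : nat -> bool) : G :=
  zexpg (a 1%N) (al 1%N) * zexpg (a 2) (al 2) * zexpg (a 3) (al 3) *
  zexpg (b 1%N) (al 4) * zexpg (b 2) (al 5) * zexpg (b 3) (al 6) *
  u_ 1%N 2 ^+ be 7 * u_ 1%N 3 ^+ be 8 * u_ 2 3 ^+ be 9 *
  v_ 1%N 2 ^+ be 10 * v_ 1%N 3 ^+ be 11 * v_ 2 3 ^+ be 12 *
  p_ 1%N 2 ^+ be 13 * p_ 1%N 3 ^+ be 14 * p_ 2 3 ^+ be 15 *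
  z_ 1%N 2 3 ^+ be 16 * t_ 1%N 2 3 ^+ be 17.

Definition G3_unique_nf : Prop :=
  (forall g : G, exists al be, G3_nf al be = g) /\
  (forall al be al' be', G3_nf al be = G3_nf al' be' ->
     (forall i, (1 <= i <= 6)%N -> al i = al' i) /\
     (forall i, (7 <= i <= 17)%N -> be i = be' i)).

(* image of the normal form word under sigma: a_i <-> b_i, u_ij <-> v_ij,
   p_ij fixed, z123 <-> t123 *)
Definition G3_sigma_nf (al : nat -> int) (be : nat -> bool) : G :=
  zexpg (b 1%N) (al 1%N) * zexpg (b 2) (al 2) * zexpg (b 3) (al 3) *
  zexpg (a 1%N) (al 4) * zexpg (a 2) (al 5) * zexpg (a 3) (al 6) *
  v_ 1%N 2 ^+ be 7 * v_ 1%N 3 ^+ be 8 * v_ 2 3 ^+ be 9 *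
  u_ 1%N 2 ^+ be 10 * u_ 1%N 3 ^+ be 11 * u_ 2 3 ^+ be 12 *
  p_ 1%N 2 ^+ be 13 * p_ 1%N 3 ^+ be 14 * p_ 2 3 ^+ be 15 *
  t_ 1%N 2 3 ^+ be 16 * z_ 1%N 2 3 ^+ be 17.

End G3.

From HB Require Import structures.
From mathcomp Require Import all_boot all_order all_algebra.
From mathcomp Require Import monoid.
From mathcomp Require Import zify.
From Stdlib Require Import ClassicalEpsilon.
Set Implicit Arguments. Unset Strict Implicit. Unset Printing Implicit Defensive.
Local Open Scope group_scope.

(* In a class-3 group generated by elements a_i, b_i satisfying the relations, the
   normal-form words are closed under multiplication: a generator multiplied on the
   right is collected into the head a_1^* ... b_3^*, and the commutators this creates
   are pushed into the tail, an elementary abelian 2-group normalised by the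
   generators.  In G x G the elements (a_i, b_i) and (b_i, a_i) satisfy the relations,
   which are symmetric under a <-> b once [b_i, a_j] = p_ij is known, and their
   normal-form words are exactly the pairs (x, sigma x).  So the graph of sigma is
   closed under products, i.e. sigma is a homomorphism; it swaps a_i and b_i, hence
   sigma^2 fixes the generators and is the identity, and sigma a_1 = b_1 <> a_1 by
   uniqueness of normal forms. *)

Section GroupFacts.
Variable H : groupType.
Implicit Types x y z c d : H.

Lemma central1 : central (1 : H).
Proof. by move=> y; rewrite mul1g mulg1. Qed.

Lemma centralM c d : central c -> central d -> central (c * d).
Proof. by move=> hc hd y; rewrite -mulgA (hd y) mulgA (hc y) mulgA. Qed.

Lemma centralV c : central c -> central c^-1.
Proof. by move=> hc y; apply: (mulIg c); rewrite -mulgA -(hc y) mulKg mulgVK. Qed.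

Lemma commg_centrall c x : central c -> [~ c, x] = 1.
Proof. by move=> hc; apply/eqP/commgP; apply: hc. Qed.

Lemma commg_centralr c x : central c -> [~ x, c] = 1.
Proof. by move=> hc; rewrite -invgR commg_centrall // invg1. Qed.

Lemma conjg_centralr c x : central c -> x ^ c = x.
Proof. by move=> hc; rewrite conjgE -(hc x) mulKg. Qed.

Lemma conjg_mulR x y : x ^ y = x * [~ x, y].
Proof. by rewrite commgEl mulVKg. Qed.

Lemma commgMr x y z : [~ x, y * z] = [~ x, z] * [~ x, y] ^ z.
Proof. by rewrite /commg /conjg ?gnorm. Qed.

Lemma commgMl x y z : [~ x * y, z] = [~ x, z] ^ y * [~ y, z].
Proof. by rewrite /commg /conjg ?gnorm. Qed.

Lemma commgVr x y : [~ x, y^-1] = [~ x, y]^-1 ^ y^-1.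
Proof. by rewrite /commg /conjg ?gnorm. Qed.

Lemma commgM_central x y c d :
  central c -> central d -> [~ x * c, y * d] = [~ x, y].
Proof.
move=> hc hd; rewrite commgMr commg_centralr // mul1g conjg_centralr //.
by rewrite -invgR commgMr commg_centralr // mul1g conjg_centralr // invgR.
Qed.

Lemma zexpg_addr1 x n : zexpg x (n + 1)%R = zexpg x n * x.
Proof.
case: n => [k|[|k]].
- have -> : (Posz k + 1)%R = Posz k.+1 by lia.
  by rewrite /= expgSr.
- by rewrite /= mulVg.
- have -> : (Negz k.+1 + 1)%R = Negz k by lia.
  by rewrite /= (expgS x k.+1) invgM mulgVK.
Qed.

Lemma zexpg_subr1 x n : zexpg x (n - 1)%R = zexpg x n * x^-1.
Proof. by rewrite -[in RHS](GRing.subrK 1%R n) zexpg_addr1 mulgK. Qed.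

Lemma zexpg_parity x n : central (x ^+ 2) ->
  exists (e : bool) c, central c /\ zexpg x n = x ^+ e * c.
Proof.
move=> hx.
have expg_parity k : exists (e : bool) c, central c /\ x ^+ k = x ^+ e * c.
  elim: k => [|k [e [c [hc IH]]]].
    by exists false, 1; rewrite mulg1; split; first exact: central1.
  rewrite expgSr {}IH; case: e; last by exists true, c; rewrite mul1g (hc x).
  exists false, (x ^+ 2 * c); split; first exact: centralM.
  by rewrite mul1g -mulgA (hc x) mulgA.
case: n => k /=; first exact: expg_parity.
have [[] [c [hc ->]]] := expg_parity k.+1.
  exists true, ((x ^+ 2)^-1 * c^-1); split; first by apply: centralM; apply: centralV.
  by rewrite invgM expg2 invgM !mulgA mulgV mul1g (centralV hc x^-1).
by exists false, c^-1; rewrite invgM !mul1g invg1 mulg1; split; first exact: centralV.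
Qed.

Lemma prod_expb_flip (I : eqType) (g : I -> H) (e : I -> bool) (s : seq I) i :
    uniq s -> i \in s -> (forall j, commute (g j) (g i)) -> g i * g i = 1 ->
  \prod_(j <- s) g j ^+ e j * g i = \prod_(j <- s) g j ^+ (e j (+) (j == i)).
Proof.
move=> + + gC gK; elim: s => //= j s IH /andP[js us].
rewrite inE !big_cons; case: (eqVneq j i) => [eji | ne_ji] /= si; last first.
  by rewrite addbF -mulgA IH.
subst j; have -> : \prod_(k <- s) g k ^+ (e k (+) (k == i)) = \prod_(k <- s) g k ^+ e k.
  rewrite big_seq [RHS]big_seq; apply: eq_bigr => k ks.
  by case: eqP ks => [->|_ _]; rewrite ?(negbTE js) ?addbF.
have giC : commute (g i) (\prod_(k <- s) g k ^+ e k).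
  by apply: commute_prod => k _; apply/commuteX/commute_sym.
rewrite -mulgA -giC.
by rewrite mulgA; case: (e i); rewrite /= ?gK ?mul1g.
Qed.

End GroupFacts.

Lemma gmulfZ (H K : groupType) (f : UMagmaMorphism.type H K) x n :
  f (zexpg x n) = zexpg (f x) n.
Proof. by case: n => k /=; rewrite ?gmulfV gmulfXn. Qed.

Lemma G3_nf_morph (H K : groupType) (f : UMagmaMorphism.type H K) (a b : nat -> H) al be :
  f (G3_nf a b al be) = G3_nf (f \o a) (f \o b) al be.
Proof. by rewrite /G3_nf !gmulfM !gmulfXn !gmulfZ /u_ /v_ /p_ /z_ /t_ !gmulfR. Qed.

Section Class3.
Variable H : groupType.
Hypothesis class3 : nilpotent_class_le3 H.

Lemma central_commg3 (x y z : H) : central [~ x, y, z].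
Proof. by move=> w; apply/commgP; rewrite class3. Qed.

Lemma commute_commg (x1 x2 y1 y2 : H) : commute [~ x1, x2] [~ y1, y2].
Proof.
apply/commgP/conjg_fixP; rewrite conjRg !(conjg_mulR _ [~ y1, y2]).
by rewrite commgM_central // -invgR; apply/centralV/central_commg3.
Qed.

End Class3.

Section ProdGroup.
Variables G1 G2 : groupType.

Lemma central_pair (x : G1 * G2) : central x.1 -> central x.2 -> central x.
Proof. by move=> h1 h2 y; apply: injective_projections; [apply: h1 | apply: h2]. Qed.

Lemma nilpotent_class_le3_pair :
  nilpotent_class_le3 G1 -> nilpotent_class_le3 G2 -> nilpotent_class_le3 (G1 * G2)%type.
Proof. by move=> c1 c2 x y z w; apply: injective_projections; [apply: c1 | apply: c2]. Qed.

Lemma G3_relations_pair (a1 b1 : nat -> G1) (a2 b2 : nat -> G2) :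
  G3_relations a1 b1 -> G3_relations a2 b2 ->
  G3_relations (fun i => (a1 i, a2 i)) (fun i => (b1 i, b2 i)).
Proof.
move=> [r1 [r2 [r3 [r4 r5]]]] [s1 [s2 [s3 [s4 s5]]]].
split; [|split; [|split; [|split]]].
- move=> i hi; have [? [? ?]] := r1 i hi; have [? [? ?]] := s1 i hi.
  by split; [apply: injective_projections | split; apply: central_pair].
- move=> i j hi hj hij.
  have [? [? [? ?]]] := r2 i j hi hj hij; have [? [? [? ?]]] := s2 i j hi hj hij.
  by do !split; apply: injective_projections.
- move=> i j hi hj; have [? ?] := r3 i j hi hj; have [? ?] := s3 i j hi hj.
  by split; apply: central_pair.
- move=> i j hi hj hij; have [? ?] := r4 i j hi hj hij; have [? ?] := s4 i j hi hj hij.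
  by split; apply: injective_projections.
- move=> i j k hi hj hk nij njk nik.
  have [? [? [? [? [? [? [? ?]]]]]]] := r5 i j k hi hj hk nij njk nik.
  have [? [? [? [? [? [? [? ?]]]]]]] := s5 i j k hi hj hk nij njk nik.
  by do !split; first [apply: injective_projections | apply: central_pair].
Qed.

End ProdGroup.

Lemma idx3P i : idx3 i -> [\/ i = 1, i = 2 | i = 3]%N.
Proof.
rewrite /idx3 => hi; have : (i = 1 \/ i = 2 \/ i = 3)%N by lia.
by case=> [->|[->|->]]; [apply: Or31 | apply: Or32 | apply: Or33].
Qed.

Section G3.
Variables (H : groupType) (a b : nat -> H).
Hypothesis rel : G3_relations a b.

Lemma commg_ab_diag i : idx3 i -> [~ a i, b i] = 1.
Proof. by case: rel => r1 _ /r1[]. Qed.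

Lemma central_a_sq i : idx3 i -> central (a i ^+ 2).
Proof. by case: rel => r1 _ /r1[_ []]. Qed.

Lemma central_b_sq i : idx3 i -> central (b i ^+ 2).
Proof. by case: rel => r1 _ /r1[_ []]. Qed.

Lemma u_sq i j : idx3 i -> idx3 j -> (i < j)%N -> u_ a i j ^+ 2 = 1.
Proof. by case: rel => _ [r2 _] hi hj /(r2 i j hi hj)[_ [_ []]]. Qed.

Lemma v_sq i j : idx3 i -> idx3 j -> (i < j)%N -> v_ b i j ^+ 2 = 1.
Proof. by case: rel => _ [r2 _] hi hj /(r2 i j hi hj)[_ [_ []]]. Qed.

Lemma p_sq i j : idx3 i -> idx3 j -> (i < j)%N -> p_ a b i j ^+ 2 = 1.
Proof. by case: rel => _ [_ [_ [r4 _]]] hi hj /(r4 i j hi hj)[]. Qed.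

Lemma central_u i j : idx3 i -> idx3 j -> central (u_ a i j).
Proof. by case: rel => _ [_ [r3 _]] hi hj; case: (r3 i j hi hj). Qed.

Lemma central_v i j : idx3 i -> idx3 j -> central (v_ b i j).
Proof. by case: rel => _ [_ [r3 _]] hi hj; case: (r3 i j hi hj). Qed.

Lemma u_sym i j : idx3 i -> idx3 j -> u_ a i j = u_ a j i.
Proof.
case: rel => _ [r2 _] hi hj; case: (ltngtP i j) => [lt_ij|lt_ji|->] //.
  by case: (r2 i j hi hj lt_ij).
by case: (r2 j i hj hi lt_ji).
Qed.

Lemma v_sym i j : idx3 i -> idx3 j -> v_ b i j = v_ b j i.
Proof.
case: rel => _ [r2 _] hi hj; case: (ltngtP i j) => [lt_ij|lt_ji|->] //.
  by case: (r2 i j hi hj lt_ij) => _ [].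
by case: (r2 j i hj hi lt_ji) => _ [].
Qed.

Lemma p_sym i j : idx3 i -> idx3 j -> p_ a b i j = p_ a b j i.
Proof.
case: rel => _ [_ [_ [r4 _]]] hi hj; case: (ltngtP i j) => [lt_ij|lt_ji|->] //.
  by case: (r4 i j hi hj lt_ij).
by case: (r4 j i hj hi lt_ji).
Qed.

Lemma p_diag i : idx3 i -> p_ a b i i = 1.
Proof. exact: commg_ab_diag. Qed.

Lemma p_inv i j : idx3 i -> idx3 j -> (p_ a b i j)^-1 = p_ a b i j.
Proof.
move=> hi hj; apply: mulg1_eq; case: (ltngtP i j) => [lt_ij|lt_ji|<-].
- exact: p_sq.
- by rewrite p_sym //; apply: p_sq.
- by rewrite p_diag // mulg1.
Qed.

Lemma commg_ba i j : idx3 i -> idx3 j -> [~ b i, a j] = p_ a b i j.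
Proof. by move=> hi hj; rewrite -invgR -/(p_ a b j i) p_inv // p_sym. Qed.

Section Distinct.
Variables i j k : nat.
Hypotheses (hi : idx3 i) (hj : idx3 j) (hk : idx3 k).
Hypotheses (nij : i != j) (njk : j != k) (nik : i != k).

Let r5 := proj2 (proj2 (proj2 (proj2 rel))) i j k hi hj hk nij njk nik.

Lemma z_swap : z_ a b i j k = z_ a b j i k.
Proof. by case: r5. Qed.

Lemma z_rot : z_ a b i j k = z_ a b k i j.
Proof. by case: r5 => _ []. Qed.

Lemma t_swap : t_ a b i j k = t_ a b j i k.
Proof. by case: r5 => _ [_ []]. Qed.

Lemma t_rot : t_ a b i j k = t_ a b k i j.
Proof. by case: r5 => _ [_ [_ []]]. Qed.

Lemma z_sq : z_ a b i j k ^+ 2 = 1.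
Proof. by case: r5 => _ [_ [_ [_ []]]]. Qed.

Lemma t_sq : t_ a b i j k ^+ 2 = 1.
Proof. by case: r5 => _ [_ [_ [_ [_ []]]]]. Qed.

Lemma central_z : central (z_ a b i j k).
Proof. by case: r5 => _ [_ [_ [_ [_ [_ []]]]]]. Qed.

Lemma central_t : central (t_ a b i j k).
Proof. by case: r5 => _ [_ [_ [_ [_ [_ []]]]]]. Qed.

End Distinct.

Lemma z_perm i j k : idx3 i -> idx3 j -> idx3 k -> i != j -> j != k -> i != k ->
  z_ a b i j k = z_ a b 1 2 3.
Proof.
move=> /idx3P[]-> /idx3P[]-> /idx3P[]-> //= _ _ _.
- by rewrite z_rot // z_swap.
- by rewrite z_swap.
- by rewrite z_rot.
- by rewrite z_rot // z_rot.
- by rewrite z_swap // z_rot.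
Qed.

Lemma t_perm i j k : idx3 i -> idx3 j -> idx3 k -> i != j -> j != k -> i != k ->
  t_ a b i j k = t_ a b 1 2 3.
Proof.
move=> /idx3P[]-> /idx3P[]-> /idx3P[]-> //= _ _ _.
- by rewrite t_rot // t_swap.
- by rewrite t_swap.
- by rewrite t_rot.
- by rewrite t_rot // t_rot.
- by rewrite t_swap // t_rot.
Qed.

Lemma commg_p_a_left i j : idx3 i -> idx3 j -> [~ p_ a b i j, a i] = 1.
Proof.
move=> hi hj; have : [~ b j, a i * a i] = 1 by apply/commg_centralr/central_a_sq.
rewrite commgMr commg_ba // p_sym // => /mulg1_eq.
by rewrite p_inv // commgEl => <-; rewrite mulVg.
Qed.

Lemma commg_p_b_right i j : idx3 i -> idx3 j -> [~ p_ a b i j, b j] = 1.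
Proof.
move=> hi hj; have : [~ a i, b j * b j] = 1 by apply/commg_centralr/central_b_sq.
rewrite commgMr -/(p_ a b i j) => /mulg1_eq.
by rewrite p_inv // commgEl => <-; rewrite mulVg.
Qed.

Lemma p_swap i j : idx3 i -> idx3 j -> p_ b a i j = p_ a b i j.
Proof. exact: commg_ba. Qed.

Lemma G3_relations_swap : G3_relations b a.
Proof.
have [_ [r2 [r3 [r4 r5]]]] := rel.
split; [|split; [|split; [|split]]].
- move=> i hi; rewrite -invgR commg_ab_diag // invg1.
  by split; [|split; [apply: central_b_sq | apply: central_a_sq]].
- by move=> i j hi hj /(r2 i j hi hj)[? [? [? ?]]].
- by move=> i j hi hj; case: (r3 i j hi hj).
- by move=> i j hi hj hij; rewrite !p_swap //; apply: r4.
- move=> i j k hi hj hk nij njk nik; rewrite /z_ /t_ !p_swap //.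
  by case: (r5 i j k hi hj hk nij njk nik) => ? [? [? [? [? [? [? ?]]]]]]; do !split.
Qed.

Lemma G3_sigma_nfE al be : G3_sigma_nf a b al be = G3_nf b a al be.
Proof. by rewrite /G3_nf /z_ /t_ !p_swap. Qed.

Hypothesis class3 : nilpotent_class_le3 H.

(* The letters of the normal form, numbered like its exponents: [gen m] for
   m = 1..6 and [tail_gen i] for i = 7..17. *)
Definition gen m : H := if (m <= 3)%N then a m else b (m - 3).

Definition tail_gen i : H :=
  match i with
  | 7%N => u_ a 1 2 | 8%N => u_ a 1 3 | 9%N => u_ a 2 3
  | 10%N => v_ b 1 2 | 11%N => v_ b 1 3 | 12%N => v_ b 2 3
  | 13%N => p_ a b 1 2 | 14%N => p_ a b 1 3 | 15%N => p_ a b 2 3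
  | 16%N => z_ a b 1 2 3 | 17%N => t_ a b 1 2 3 | _ => 1
  end.

Definition nf_head (al : nat -> int) : H := \prod_(m <- iota 1 6) zexpg (gen m) (al m).
Definition nf_tail (be : nat -> bool) : H := \prod_(i <- iota 7 11) tail_gen i ^+ be i.
Definition in_tail x := exists be, x = nf_tail be.

Lemma G3_nf_head_tail al be : G3_nf a b al be = nf_head al * nf_tail be.
Proof. by rewrite /G3_nf /nf_head /nf_tail !big_cons !big_nil /= !mulg1 !mulgA. Qed.

Variant gen_spec : H -> Prop :=
  | GenA i of idx3 i : gen_spec (a i)
  | GenB i of idx3 i : gen_spec (b i).

Lemma genP m : (1 <= m <= 6)%N -> gen_spec (gen m).
Proof.
rewrite /gen => hm; case: ifPn => h; [apply: GenA | apply: GenB]; rewrite /idx3; lia.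
Qed.

Lemma gen_a i : idx3 i -> gen i = a i.
Proof. by rewrite /gen /idx3 => /andP[_ ->]. Qed.

Lemma gen_b i : idx3 i -> gen (i + 3) = b i.
Proof. by rewrite /gen /idx3 addnK => hi; rewrite ifN //; lia. Qed.

Lemma central_gen_sq m : (1 <= m <= 6)%N -> central (gen m ^+ 2).
Proof. by case/genP=> i hi; [apply: central_a_sq | apply: central_b_sq]. Qed.

Lemma tail_gen_commg i : exists x y, tail_gen i = [~ x, y].
Proof.
do 18 (case: i => [|i]; first by [exists 1, 1; rewrite comm1g | do 2 eexists]).
by exists 1, 1; rewrite comm1g.
Qed.

Lemma commute_tail_gen i j : commute (tail_gen i) (tail_gen j).
Proof.
have [x [y ->]] := tail_gen_commg i; have [z [w ->]] := tail_gen_commg j.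
exact: commute_commg.
Qed.

Lemma tail_gen_sq i : (7 <= i <= 17)%N -> tail_gen i * tail_gen i = 1.
Proof.
move=> hi; have : i \in iota 7 11 by rewrite mem_iota; lia.
rewrite !inE; do ![case/orP=> [/eqP-> | ] | move/eqP->].
all: by [apply: u_sq | apply: v_sq | apply: p_sq | apply: z_sq | apply: t_sq].
Qed.

Lemma central_tail_gen i : (7 <= i <= 12)%N || (16 <= i <= 17)%N -> central (tail_gen i).
Proof.
move=> hi; have : i \in iota 7 6 ++ iota 16 2 by rewrite mem_cat !mem_iota; lia.
rewrite !inE; do ![case/orP=> [/eqP-> | ] | move/eqP->].
all: by [apply: central_u | apply: central_v | apply: central_z | apply: central_t].
Qed.

Lemma in_tail1 : in_tail 1.
Proof. by exists (fun=> false); rewrite /nf_tail big1_seq. Qed.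

Lemma in_tail_mulr_gen x i : in_tail x -> (7 <= i <= 17)%N -> in_tail (x * tail_gen i).
Proof.
move=> [be ->] hi; exists (fun j => be j (+) (j == i)).
apply: prod_expb_flip; [exact: iota_uniq | by rewrite mem_iota; lia | | exact: tail_gen_sq].
by move=> j; apply: commute_tail_gen.
Qed.

Lemma in_tail_gen i : (7 <= i <= 17)%N -> in_tail (tail_gen i).
Proof. by rewrite -[tail_gen i]mul1g; apply/in_tail_mulr_gen/in_tail1. Qed.

Lemma in_tailM x y : in_tail x -> in_tail y -> in_tail (x * y).
Proof.
move=> hx [be ->]; rewrite /nf_tail.
have : forall j, j \in iota 7 11 -> (7 <= j <= 17)%N by move=> j; rewrite mem_iota; lia.
elim: (iota 7 11) x hx => [|j s IH] x hx hs; first by rewrite big_nil mulg1.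
rewrite big_cons mulgA; apply: IH => [|k ks]; last exact/hs/mem_behead.
case: (be j); last by rewrite mulg1.
exact/in_tail_mulr_gen/hs/mem_head.
Qed.

Lemma in_tail_prod (I : eqType) (r : seq I) (F : I -> H) :
  (forall i, i \in r -> in_tail (F i)) -> in_tail (\prod_(i <- r) F i).
Proof.
elim: r => [|i r IH] hF; first by rewrite big_nil; exact: in_tail1.
by rewrite big_cons; apply: in_tailM; [apply/hF/mem_head | apply: IH => j jr; apply/hF/mem_behead].
Qed.

Lemma in_tailV x : in_tail x -> in_tail x^-1.
Proof.
move=> [be ->]; rewrite /nf_tail -[iota 7 11]revK -prodgV; apply: in_tail_prod => i.
rewrite mem_rev mem_iota => hi; case: (be i); last by rewrite invg1; exact: in_tail1.
by rewrite (mulg1_eq (tail_gen_sq _)) ?expg1; [apply: in_tail_gen | ]; lia.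
Qed.

Lemma in_tail_conj x y :
  (forall i, (7 <= i <= 17)%N -> in_tail (tail_gen i ^ y)) -> in_tail x -> in_tail (x ^ y).
Proof.
move=> hy [be ->]; rewrite /nf_tail conjg_prod; apply: in_tail_prod => i.
rewrite mem_iota conjXg => hi; case: (be i); last exact: in_tail1.
by apply: hy; lia.
Qed.

Lemma in_tail_u i j : idx3 i -> idx3 j -> in_tail (u_ a i j).
Proof.
move=> hi hj; wlog le_ij : i j hi hj / (i <= j)%N.
  by move=> hw; case: (leqP i j) => [|/ltnW] h; [|rewrite u_sym //]; apply: hw.
case/idx3P: hi hj le_ij => -> /idx3P[]-> // _; rewrite /u_ ?commgg.
all: by [apply: in_tail1 | apply: (@in_tail_gen 7) | apply: (@in_tail_gen 8)
        | apply: (@in_tail_gen 9)].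
Qed.

Lemma in_tail_v i j : idx3 i -> idx3 j -> in_tail (v_ b i j).
Proof.
move=> hi hj; wlog le_ij : i j hi hj / (i <= j)%N.
  by move=> hw; case: (leqP i j) => [|/ltnW] h; [|rewrite v_sym //]; apply: hw.
case/idx3P: hi hj le_ij => -> /idx3P[]-> // _; rewrite /v_ ?commgg.
all: by [apply: in_tail1 | apply: (@in_tail_gen 10) | apply: (@in_tail_gen 11)
        | apply: (@in_tail_gen 12)].
Qed.

Lemma in_tail_p i j : idx3 i -> idx3 j -> in_tail (p_ a b i j).
Proof.
move=> hi hj; wlog le_ij : i j hi hj / (i <= j)%N.
  by move=> hw; case: (leqP i j) => [|/ltnW] h; [|rewrite p_sym //]; apply: hw.
case/idx3P: hi hj le_ij => -> /idx3P[]-> // _; rewrite ?p_diag //.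
all: by [apply: in_tail1 | apply: (@in_tail_gen 13) | apply: (@in_tail_gen 14)
        | apply: (@in_tail_gen 15)].
Qed.

Lemma in_tail_commg_p_a i j k : idx3 i -> idx3 j -> idx3 k ->
  in_tail [~ p_ a b i j, a k].
Proof.
move=> hi hj hk.
case: (eqVneq i j) => [<-|nij]; first by rewrite p_diag // comm1g; apply: in_tail1.
case: (eqVneq k i) => [->|nki]; first by rewrite commg_p_a_left //; apply: in_tail1.
case: (eqVneq k j) => [->|nkj].
  by rewrite p_sym // commg_p_a_left //; apply: in_tail1.
have njk : j != k by rewrite eq_sym.
have nik : i != k by rewrite eq_sym.
by rewrite -/(z_ a b i j k) z_perm //; apply: (@in_tail_gen 16).
Qed.

Lemma in_tail_commg_p_b i j k : idx3 i -> idx3 j -> idx3 k ->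
  in_tail [~ p_ a b i j, b k].
Proof.
move=> hi hj hk.
case: (eqVneq i j) => [<-|nij]; first by rewrite p_diag // comm1g; apply: in_tail1.
case: (eqVneq k j) => [->|nkj]; first by rewrite commg_p_b_right //; apply: in_tail1.
case: (eqVneq k i) => [->|nki].
  by rewrite p_sym // commg_p_b_right //; apply: in_tail1.
have njk : j != k by rewrite eq_sym.
have nik : i != k by rewrite eq_sym.
by rewrite -/(t_ a b i j k) t_perm //; apply: (@in_tail_gen 17).
Qed.

Lemma in_tail_commg_gen j k : (1 <= j <= 6)%N -> (1 <= k <= 6)%N ->
  in_tail [~ gen j, gen k].
Proof.
case/genP=> i hi /genP[] l hl; rewrite ?commg_ba //.
- exact: in_tail_u.
- exact: in_tail_p.
- exact: in_tail_p.
- exact: in_tail_v.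
Qed.

Lemma in_tail_commg_tail_gen i m : (7 <= i <= 17)%N -> (1 <= m <= 6)%N ->
  in_tail [~ tail_gen i, gen m].
Proof.
move=> hi hm; case: (boolP ((7 <= i <= 12) || (16 <= i <= 17))%N).
  by move/central_tail_gen/commg_centrall->; apply: in_tail1.
move=> hpi; have : i \in iota 13 3 by rewrite mem_iota; lia.
rewrite !inE; do ![case/orP=> [/eqP-> | ] | move/eqP->]; case/genP: hm => k hk.
all: by [apply: in_tail_commg_p_a | apply: in_tail_commg_p_b].
Qed.

Lemma in_tail_conjg_gen x m : (1 <= m <= 6)%N -> in_tail x -> in_tail (x ^ gen m).
Proof.
move=> hm; apply: in_tail_conj => i hi; rewrite conjg_mulR.
by apply: in_tailM; [apply: in_tail_gen | apply: in_tail_commg_tail_gen].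
Qed.

Lemma in_tail_conjg_genV x m : (1 <= m <= 6)%N -> in_tail x -> in_tail (x ^ (gen m)^-1).
Proof.
move=> hm hx; have -> : (gen m)^-1 = gen m * (gen m ^+ 2)^-1.
  by rewrite expg2 invgM mulgA mulgV mul1g.
by rewrite conjgM conjg_centralr; [apply: in_tail_conjg_gen | apply/centralV/central_gen_sq].
Qed.

Lemma in_tail_conjg_zexpg x m n : (1 <= m <= 6)%N -> in_tail x -> in_tail (x ^ zexpg (gen m) n).
Proof.
move=> hm hx; case: n => k /=; rewrite -?expVgn.
  by elim: k => [|k IH]; rewrite ?conjg1 // expgSr conjgM; apply: in_tail_conjg_gen.
by elim: k.+1 => [|l IH]; rewrite ?conjg1 // expgSr conjgM; apply: in_tail_conjg_genV.
Qed.

Lemma in_tail_conjg_head x s al : all (fun m => 1 <= m <= 6)%N s -> in_tail x ->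
  in_tail (x ^ \prod_(m <- s) zexpg (gen m) (al m)).
Proof.
elim: s x => [|m s IH] x; first by rewrite big_nil conjg1.
by case/andP=> hm hs hx; rewrite big_cons conjgM; apply/IH/in_tail_conjg_zexpg.
Qed.

Section Collect.
Variable y : H.
Hypothesis in_tail_commg_gen_y : forall m, (1 <= m <= 6)%N -> in_tail [~ gen m, y].

Lemma in_tail_commg_zexpg_gen m n : (1 <= m <= 6)%N -> in_tail [~ zexpg (gen m) n, y].
Proof.
move=> hm; have [e [c [hc ->]]] := zexpg_parity n (central_gen_sq hm).
rewrite -[y]mulg1 commgM_central //; last exact: central1.
by case: e; [apply: in_tail_commg_gen_y | rewrite comm1g; apply: in_tail1].
Qed.

Lemma in_tail_commg_head s al : all (fun m => 1 <= m <= 6)%N s ->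
  in_tail [~ \prod_(m <- s) zexpg (gen m) (al m), y].
Proof.
elim: s => [_|m s IH /andP[hm hs]]; first by rewrite big_nil comm1g; apply: in_tail1.
rewrite big_cons commgMl; apply: in_tailM; last exact: IH.
by apply: in_tail_conjg_head => //; apply: in_tail_commg_zexpg_gen.
Qed.

Variables (k : nat) (d : int).
Hypothesis zexpg_gen_mulr : forall n, zexpg (gen k) n * y = zexpg (gen k) (n + d).

Definition shift_exp (al : nat -> int) m := if m == k then (al m + d)%R else al m.

Lemma head_mulr_collect s al : uniq s -> k \in s -> all (fun m => 1 <= m <= 6)%N s ->
  exists2 tau, in_tail tau & \prod_(m <- s) zexpg (gen m) (al m) * y =
                             \prod_(m <- s) zexpg (gen m) (shift_exp al m) * tau.
Proof.
elim: s => [|j s IH] //= /andP[js us] hk /andP[hj hs]; rewrite !big_cons.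
case: (eqVneq j k) => [ejk | njk]; last first.
  rewrite inE eq_sym (negbTE njk) /= in hk.
  have [tau htau e] := IH us hk hs.
  by exists tau => //; rewrite -mulgA e mulgA /shift_exp (negbTE njk).
subst j; set P := \prod_(m <- s) zexpg (gen m) (al m).
exists [~ P, y]; first exact: in_tail_commg_head.
have -> : \prod_(m <- s) zexpg (gen m) (shift_exp al m) = P.
  rewrite big_seq [RHS]big_seq; apply: eq_bigr => m ms.
  by rewrite /shift_exp; case: eqVneq ms => // ->; rewrite (negbTE js).
by rewrite -mulgA (commgC P y) !mulgA zexpg_gen_mulr /shift_exp eqxx.
Qed.

Lemma nf_mulr_collect al be : (1 <= k <= 6)%N -> (forall x, in_tail x -> in_tail (x ^ y)) ->
  exists al' be', G3_nf a b al be * y = G3_nf a b al' be'.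
Proof.
move=> hk conj_y; have k_iota : k \in iota 1 6 by rewrite mem_iota; lia.
have [tau htau e] := head_mulr_collect al (iota_uniq 1 6) k_iota isT.
have [be' e'] := in_tailM htau (conj_y _ (ex_intro _ be erefl)).
exists (shift_exp al), be'.
by rewrite !G3_nf_head_tail -mulgA (conjgC (nf_tail be) y) mulgA [nf_head al * y]e -mulgA e'.
Qed.

End Collect.

Lemma nf_mulr_gen al be m : (1 <= m <= 6)%N ->
  exists al' be', G3_nf a b al be * gen m = G3_nf a b al' be'.
Proof.
move=> hm; apply: (@nf_mulr_collect _ _ m 1%R) => // [j hj | n | x].
- exact: in_tail_commg_gen.
- exact/esym/zexpg_addr1.
- exact: in_tail_conjg_gen.
Qed.

Lemma nf_mulr_genV al be m : (1 <= m <= 6)%N ->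
  exists al' be', G3_nf a b al be * (gen m)^-1 = G3_nf a b al' be'.
Proof.
move=> hm; apply: (@nf_mulr_collect _ _ m (-1)%R) => // [j hj | n | x].
- by rewrite commgVr; apply/in_tail_conjg_genV/in_tailV/in_tail_commg_gen.
- exact/esym/zexpg_subr1.
- exact: in_tail_conjg_genV.
Qed.

Definition is_nf x := exists al be, x = G3_nf a b al be.
Definition nf_mulr_closed y := forall x, is_nf x -> is_nf (x * y).
Definition nf_stable y := nf_mulr_closed y /\ nf_mulr_closed y^-1.

Lemma nf_stable1 : nf_stable 1.
Proof. by split=> x; rewrite ?invg1 mulg1. Qed.

Lemma nf_stableM y z : nf_stable y -> nf_stable z -> nf_stable (y * z).
Proof.
move=> [y_cl yV_cl] [z_cl zV_cl]; split=> x hx; rewrite ?invgM mulgA.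
  exact/z_cl/y_cl.
exact/yV_cl/zV_cl.
Qed.

Lemma nf_stableV y : nf_stable y -> nf_stable y^-1.
Proof. by case=> y_cl yV_cl; split; rewrite ?invgK. Qed.

Lemma nf_stableX y n : nf_stable y -> nf_stable (y ^+ n).
Proof.
by move=> hy; elim: n => [|n IH]; [apply: nf_stable1 | rewrite expgS; apply: nf_stableM].
Qed.

Lemma nf_stableZ y n : nf_stable y -> nf_stable (zexpg y n).
Proof. by case: n => k hy /=; [|apply: nf_stableV]; apply: nf_stableX. Qed.

Lemma nf_stableR y z : nf_stable y -> nf_stable z -> nf_stable [~ y, z].
Proof.
move=> hy hz; rewrite /commg /conjg.
by do !apply: nf_stableM; do ?apply: nf_stableV.
Qed.

Lemma nf_stable_gen m : (1 <= m <= 6)%N -> nf_stable (gen m).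
Proof.
move=> hm; split=> _ [al [be ->]].
  by have [al' [be' ->]] := nf_mulr_gen al be hm; exists al', be'.
by have [al' [be' ->]] := nf_mulr_genV al be hm; exists al', be'.
Qed.

Lemma nf_stable_nf al be : nf_stable (G3_nf a b al be).
Proof.
have st_a i : idx3 i -> nf_stable (a i).
  by move=> hi; rewrite -gen_a //; apply: nf_stable_gen; move: hi; rewrite /idx3; lia.
have st_b i : idx3 i -> nf_stable (b i).
  by move=> hi; rewrite -gen_b //; apply: nf_stable_gen; move: hi; rewrite /idx3; lia.
rewrite /G3_nf /u_ /v_ /p_ /z_ /t_.
by do !apply: nf_stableM; (apply: nf_stableZ || apply: nf_stableX);
  do ?apply: nf_stableR; (apply: st_a || apply: st_b).
Qed.

Lemma is_nfM x y : is_nf x -> is_nf y -> is_nf (x * y).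
Proof. by move=> hx [al [be ->]]; apply: (nf_stable_nf al be).1. Qed.

End G3.

Definition single_exp k : nat -> int := fun m => if m == k then 1%R else 0%R.

Section NormalFormWords.
Variables (H : groupType) (a b : nat -> H).

Lemma G3_nf_single_a i : idx3 i -> G3_nf a b (single_exp i) (fun=> false) = a i.
Proof.
by case/idx3P=> ->; rewrite /G3_nf /single_exp /= !expg0 expg1 !mulg1 ?mul1g.
Qed.

Lemma G3_nf_single_b i : idx3 i -> G3_nf a b (single_exp (i + 3)) (fun=> false) = b i.
Proof.
by case/idx3P=> ->; rewrite /G3_nf /single_exp /= !expg0 expg1 !mulg1 ?mul1g.
Qed.

Lemma eq_G3_nf (a' b' : nat -> H) al be :
    (forall i, idx3 i -> a' i = a i) -> (forall i, idx3 i -> b' i = b i) ->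
  G3_nf a' b' al be = G3_nf a b al be.
Proof. by move=> ha hb; rewrite /G3_nf /z_ /t_ /u_ /v_ /p_ !ha // !hb. Qed.

Lemma G3_nf_lift (F : (nat -> int) -> (nat -> bool) -> H) :
    G3_unique_nf a b ->
    (forall al be al' be', (forall i, (1 <= i <= 6)%N -> al i = al' i) ->
       (forall i, (7 <= i <= 17)%N -> be i = be' i) -> F al be = F al' be') ->
  exists f : H -> H, forall al be, f (G3_nf a b al be) = F al be.
Proof.
move=> [nf_surj nf_inj] F_ext.
have exps x : {e : (nat -> int) * (nat -> bool) | G3_nf a b e.1 e.2 = x}.
  by apply: constructive_indefinite_description; have [al [be e]] := nf_surj x; exists (al, be).
exists (fun x => F (sval (exps x)).1 (sval (exps x)).2) => al be.
case: (exps _) => [[al' be'] /= /nf_inj[eq_al eq_be]]; exact: F_ext.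
Qed.

Lemma eq_G3_sigma_nf al be al' be' :
    (forall i, (1 <= i <= 6)%N -> al i = al' i) ->
    (forall i, (7 <= i <= 17)%N -> be i = be' i) ->
  G3_sigma_nf a b al be = G3_sigma_nf a b al' be'.
Proof. by move=> ha hb; rewrite /G3_sigma_nf !ha // !hb. Qed.

End NormalFormWords.

Section Sigma.
Variables (G : groupType) (a b : nat -> G).
Hypotheses (rel : G3_relations a b) (class3 : nilpotent_class_le3 G).
Hypothesis uniq_nf : G3_unique_nf a b.
Variable sigma : G -> G.
Hypothesis sigma_nf : forall al be, sigma (G3_nf a b al be) = G3_sigma_nf a b al be.

Let A i : G * G := (a i, b i).
Let B i : G * G := (b i, a i).

Lemma G3_nf_graph al be :
  G3_nf A B al be = (G3_nf a b al be, sigma (G3_nf a b al be)).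
Proof.
apply: injective_projections; first exact: (G3_nf_morph fst).
by rewrite sigma_nf G3_sigma_nfE //; apply: (G3_nf_morph snd).
Qed.

Lemma is_nf_graph x : is_nf A B (x, sigma x).
Proof. by have [al [be <-]] := uniq_nf.1 x; exists al, be; rewrite G3_nf_graph. Qed.

Lemma sigmaM : {morph sigma : x y / x * y}.
Proof.
move=> x y; have relAB : G3_relations A B.
  exact: G3_relations_pair (G3_relations_swap rel).
have [al [be]] := is_nfM relAB (nilpotent_class_le3_pair class3 class3)
  (is_nf_graph x) (is_nf_graph y).
by rewrite G3_nf_graph => -[-> ->].
Qed.

Lemma sigma1 : sigma 1 = 1.
Proof. by apply: (mulgI (sigma 1)); rewrite -sigmaM !mulg1. Qed.

Let sigma_morph : UMagmaMorphism.type G G :=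
  HB.pack sigma (isMultiplicative.Build _ _ sigma sigmaM)
    (Multiplicative_isUMagmaMorphism.Build _ _ sigma sigma1).

Lemma sigma_G3_nf (a' b' : nat -> G) al be :
  sigma (G3_nf a' b' al be) = G3_nf (sigma \o a') (sigma \o b') al be.
Proof. exact: (G3_nf_morph sigma_morph). Qed.

Lemma sigma_a i : idx3 i -> sigma (a i) = b i.
Proof.
by move=> hi; rewrite -{1}(G3_nf_single_a a b hi) sigma_nf G3_sigma_nfE // G3_nf_single_a.
Qed.

Lemma sigma_b i : idx3 i -> sigma (b i) = a i.
Proof.
by move=> hi; rewrite -{1}(G3_nf_single_b a b hi) sigma_nf G3_sigma_nfE // G3_nf_single_b.
Qed.

Lemma sigmaK : involutive sigma.
Proof.
move=> x; have [al [be <-]] := uniq_nf.1 x.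
by rewrite !sigma_G3_nf; apply: eq_G3_nf => i hi /=; rewrite ?(sigma_a hi, sigma_b hi).
Qed.

Lemma sigma_a1 : sigma (a 1) <> a 1.
Proof.
rewrite sigma_a // -(G3_nf_single_a a b (erefl : idx3 1)).
rewrite -(G3_nf_single_b a b (erefl : idx3 1)).
by move/uniq_nf.2 => [/(_ 1%N erefl)].
Qed.

End Sigma.

Unset Implicit Arguments.
Set Strict Implicit.

Theorem proposition2p9 (G : groupType) (a b : nat -> G) :
  G3_relations a b ->
  nilpotent_class_le3 G ->
  G3_unique_nf a b ->
  (exists sigma : G -> G,
     forall al be, sigma (G3_nf a b al be) = G3_sigma_nf a b al be) /\
  (forall sigma : G -> G,
     (forall al be, sigma (G3_nf a b al be) = G3_sigma_nf a b al be) ->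
     (forall x y : G, sigma (x * y) = sigma x * sigma y) /\
     bijective sigma /\
     (forall x : G, sigma (sigma x) = x) /\
     (exists x : G, sigma x <> x)).
Proof.
move=> rel class3 uniq_nf; split.
  by apply: G3_nf_lift uniq_nf _; apply: eq_G3_sigma_nf.
move=> sigma sigma_nf; have sigma_invol := sigmaK rel class3 uniq_nf sigma_nf.
split; first exact: (sigmaM rel class3 uniq_nf sigma_nf).
split; first exact: inv_bij sigma_invol.
by split=> //; exists (a 1%N); apply: (sigma_a1 rel uniq_nf sigma_nf).
Qed.
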